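(* For $0<h\le i\le n$ and any pair $(d,p)\in DP_i$: if $dp(h,i)>(d,p)$, then $dp(h-1,i)\ge(d,p)$.
   Context: Let $x_0\le x_1\le\cdots\le x_{n+1}$ be real numbers, $\{x\}=x-\lfloor x\rfloor$, and let $\pi=(\pi_0,\dots,\pi_{n+1})$ be the permutation of $\{0,\dots,n+1\}$ such that for $0\le i<j\le n+1$, $\pi_i>\pi_j$ iff $(\{x_i\},-x_i,i)<(\{x_j\},-x_j,j)$ lexicographically. For a sequence of indices $s_0<\cdots<s_k$, a drop is a consecutive pair $(s_{h-1},s_h)$ with $\pi_{s_{h-1}}>\pi_{s_h}$. For $0\le h\le i\le n$, $dp(h,i)$ is the pair $(d(h,i),p(h,i))$, where $d(h,i)$ is the minimum number of drops over all sequences of $h+1$ indices $0=s_0<s_1<\cdots<s_h\le i$, and $p(h,i)$ is the minimum of $\pi_{s_h}$ over all such sequences having exactly $d(h,i)$ drops. Let $DP_i=\{dp(h,i)\mid 0\le h\le i\}$. Pairs are compared lexicographically. *)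

From HB Require Import structures.
From mathcomp Require Import all_boot all_order all_algebra fingroup perm.
From mathcomp Require Import reals.
Set Implicit Arguments. Unset Strict Implicit. Unset Printing Implicit Defensive.
Import Order.TTheory GRing.Theory Num.Theory.
Local Open Scope ring_scope.

Definition frac (R : realType) (x : R) : R := (x - (Num.floor x)%:~R)%R.

(* key_i = ({x_i}, -x_i, i); keylt x i j <=> key_i < key_j lexicographically *)
Definition keylt (R : realType) (x : nat -> R) (i j : nat) : bool :=
  ((frac (x i) < frac (x j))%R) ||
  ((frac (x i) == frac (x j)) &&
   (((- x i < - x j)%R) || ((- x i == - x j) && (i < j)%N))).

Definition is_pi (R : realType) (n : nat) (x : nat -> R) (pi : {perm 'I_n.+2}) : Prop :=
  forall i j : 'I_n.+2, (i < j)%N -> ((pi j < pi i)%N = keylt x i j).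

Definition drops (n : nat) (pi : {perm 'I_n.+2}) (s : seq 'I_n.+2) : nat :=
  count (fun pr : 'I_n.+2 * 'I_n.+2 => (pi pr.2 < pi pr.1)%N) (zip s (behead s)).

Definition valid_seq (n h i : nat) (t : h.+1.-tuple 'I_n.+2) : bool :=
  [&& val (tnth t ord0) == 0%N, sorted ltn (map val t) & all (fun j : 'I_n.+2 => (val j <= i)%N) t].

(* d(h,i): minimum number of drops (the default n+2 is only used when there is no
   valid sequence, i.e. h > i, which never happens for 0 <= h <= i) *)
Definition dd (n : nat) (pi : {perm 'I_n.+2}) (h i : nat) : nat :=
  \big[minn/n.+2]_(t : h.+1.-tuple 'I_n.+2 | valid_seq i t) drops pi t.

Definition pp (n : nat) (pi : {perm 'I_n.+2}) (h i : nat) : nat :=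
  \big[minn/n.+2]_(t : h.+1.-tuple 'I_n.+2 |
      valid_seq i t && (drops pi t == dd pi h i)) val (pi (tnth t ord_max)).

Definition dp (n : nat) (pi : {perm 'I_n.+2}) (h i : nat) : nat * nat :=
  (dd pi h i, pp pi h i).

Definition lexlt (a b : nat * nat) : bool :=
  (a.1 < b.1)%N || ((a.1 == b.1) && (a.2 < b.2)%N).
Definition lexle (a b : nat * nat) : bool :=
  (a.1 < b.1)%N || ((a.1 == b.1) && (a.2 <= b.2)%N).

Definition inDP (n : nat) (pi : {perm 'I_n.+2}) (i : nat) (q : nat * nat) : Prop :=
  exists2 h, (h <= i)%N & dp pi h i = q.

(* Deleting the last index of an admissible sequence s_0 < ... < s_(h+1) <= i
   gives an admissible sequence of length h + 1 which has at most as many drops,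
   and if it has exactly as many, its last pi-value is not larger.  Hence
   h |-> dp(h, i) is lexicographically nondecreasing, for any permutation pi.  Now if (d, p) = dp(h', i)
   is below dp(h, i), then h' < h, so (d, p) <= dp(h - 1, i). *)

From HB Require Import structures.
From mathcomp Require Import all_boot all_order all_algebra fingroup perm.
From mathcomp Require Import reals.
From mathcomp Require Import zify.
Set Implicit Arguments. Unset Strict Implicit. Unset Printing Implicit Defensive.
Import Order.TTheory.

Lemma lexle_refl : reflexive lexle.
Proof. by case=> a b; rewrite /lexle /= eqxx leqnn orbT. Qed.

Lemma lexle_trans : transitive lexle.
Proof. by case=> [b1 b2] [a1 a2] [c1 c2]; rewrite /lexle /=; lia. Qed.

Lemma lexltNge a b : lexlt a b = ~~ lexle b a.
Proof.
case: a b => [a1 a2] [b1 b2]; rewrite /lexlt /lexle /=.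
by case: ltngtP => _; rewrite ?andbF ?andbT -?ltnNge.
Qed.

Definition tuple_belast (T : Type) k (t : k.+2.-tuple T) : k.+1.-tuple T :=
  belast_tuple (thead t) (behead_tuple t).

Lemma rcons_tuple_belast (T : Type) k (t : k.+2.-tuple T) :
  rcons (tuple_belast t) (tnth t ord_max) = t.
Proof.
case: t => [[|x s] //= st].
rewrite /thead !(tnth_nth x) /= lastI; congr rcons.
by move: st; rewrite eqSS => /eqP sz; rewrite -nth_last sz.
Qed.

Lemma thead_tuple_belast (T : Type) k (t : k.+2.-tuple T) :
  thead (tuple_belast t) = thead t.
Proof.
rewrite /thead !(tnth_nth (thead t)) -[in RHS]rcons_tuple_belast.
by rewrite nth_rcons size_tuple.
Qed.

Section DropProfile.
Variables (n : nat) (pi : {perm 'I_n.+2}).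

Lemma drops_cons a s :
  drops pi (a :: s) = (if s is b :: _ then (pi b < pi a)%N else false) + drops pi s.
Proof. by case: s. Qed.

Lemma drops_rcons a s y :
  drops pi (rcons (a :: s) y) = drops pi (a :: s) + (pi y < pi (last a s))%N.
Proof.
elim: s a => [|b s IHs] a; first by rewrite /drops /= addn0.
by rewrite rcons_cons drops_cons IHs [drops pi (a :: _)]drops_cons /= addnA.
Qed.

Lemma drops_rcons_tuple k (s : k.+1.-tuple 'I_n.+2) y :
  drops pi (rcons s y) = drops pi s + (pi y < pi (tnth s ord_max))%N.
Proof.
case: s => [[|a s] //= size_s].
rewrite drops_rcons (tnth_nth a) /=; move/eqP: size_s => [<-].
by rewrite nth_last.
Qed.

Lemma valid_seq_tuple_belast i k (t : k.+2.-tuple 'I_n.+2) :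
  valid_seq i t -> valid_seq i (tuple_belast t).
Proof.
rewrite /valid_seq => /and3P [t0 t_sorted t_le]; apply/and3P; split.
- by rewrite -[tnth _ ord0]/(thead _) thead_tuple_belast.
- apply: (subseq_sorted ltn_trans _ t_sorted); apply: map_subseq.
  by rewrite -[X in subseq _ X]rcons_tuple_belast subseq_rcons.
- by move: t_le; rewrite -rcons_tuple_belast all_rcons => /andP [].
Qed.

Lemma dd_le_drops h i (t : h.+1.-tuple 'I_n.+2) :
  valid_seq i t -> (dd pi h i <= drops pi t)%N.
Proof. by move=> vt; rewrite /dd -minEnat; apply: (@bigmin_le_cond _ nat). Qed.

Lemma pp_le_last h i (t : h.+1.-tuple 'I_n.+2) :
  valid_seq i t -> drops pi t = dd pi h i -> (pp pi h i <= pi (tnth t ord_max))%N.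
Proof.
by move=> vt dt; rewrite /pp -minEnat; apply: (@bigmin_le_cond _ nat); rewrite vt dt eqxx.
Qed.

Lemma drops_tuple_belast_optimal h i (t : h.+2.-tuple 'I_n.+2) :
  valid_seq i t -> drops pi t = dd pi h i ->
  drops pi (tuple_belast t) = dd pi h i
  /\ (pi (tnth (tuple_belast t) ord_max) <= pi (tnth t ord_max))%N.
Proof.
move=> vt dt; have le_dd := dd_le_drops (valid_seq_tuple_belast vt).
have := drops_rcons_tuple (tuple_belast t) (tnth t ord_max).
rewrite rcons_tuple_belast dt; case: ltnP => [_|le_last] /= dd_eq.
  by move: le_dd; rewrite dd_eq addn1 ltnn.
by rewrite dd_eq addn0.
Qed.

Lemma leq_dd_succ h i : (dd pi h i <= dd pi h.+1 i)%N.
Proof.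
rewrite {2}/dd -minEnat; apply: (@le_bigmin _ nat).
  by rewrite /dd -minEnat; apply: (@bigmin_le_id _ nat).
move=> t vt; rewrite -rcons_tuple_belast drops_rcons_tuple.
exact: leq_trans (dd_le_drops (valid_seq_tuple_belast vt)) (leq_addr _ _).
Qed.

Lemma leq_pp_succ h i : dd pi h i = dd pi h.+1 i -> (pp pi h i <= pp pi h.+1 i)%N.
Proof.
move=> dd_eq; rewrite {2}/pp -minEnat; apply: (@le_bigmin _ nat).
  by rewrite /pp -minEnat; apply: (@bigmin_le_id _ nat).
move=> t /andP [vt /eqP]; rewrite -dd_eq => /(drops_tuple_belast_optimal vt) [dt' le_last].
exact: leq_trans (pp_le_last (valid_seq_tuple_belast vt) dt') le_last.
Qed.

Lemma lexle_dp_succ h i : lexle (dp pi h i) (dp pi h.+1 i).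
Proof.
have := leq_dd_succ h i; rewrite leq_eqVlt => /orP [/eqP dd_eq|dd_lt].
  by rewrite /lexle /= dd_eq ltnn eqxx (leq_pp_succ dd_eq) orbT.
by rewrite /lexle /= dd_lt.
Qed.

Lemma lexle_dp i : {homo dp pi ^~ i : h h' / (h <= h')%N >-> lexle h h'}.
Proof. exact: homo_leq lexle_refl lexle_trans (lexle_dp_succ ^~ i). Qed.

End DropProfile.

Theorem lemma9 (R : realType) (n : nat) (x : nat -> R)
  (hx : forall i j : nat, (i <= j)%N -> (j <= n.+1)%N -> (x i <= x j)%R)
  (pi : {perm 'I_n.+2}) (hpi : is_pi x pi)
  (h i : nat) (h0 : (0 < h)%N) (hi : (h <= i)%N) (iN : (i <= n)%N)
  (d p : nat) (hdp : inDP pi i (d, p)) :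
  lexlt (d, p) (dp pi h i) -> lexle (d, p) (dp pi h.-1 i).
Proof.
case: hdp => h' _ <-; case: (leqP h h') => [le_h_h'|lt_h'_h].
  by rewrite lexltNge lexle_dp.
by move=> _; apply: lexle_dp; rewrite -ltnS prednK.
Qed.
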